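(* For integers $n\ge0$ and $0\le k\le n$, the number of ways to place $k$ dots in cells of the double staircase $2\delta_n$ such that each row contains at most one dot and each column contains at most one dot is $$\frac{(n+1)!}{(n-k+1)!}\binom{n}{k}.$$
   Context: The double staircase $2\delta_n$ is the Young diagram with $n$ rows of lengths $2n,2n-2,\dots,2$ (left-justified; $2\delta_0$ is empty). *)

From mathcomp Require Import all_boot.
Set Implicit Arguments. Unset Strict Implicit. Unset Printing Implicit Defensive.

(* Cells of the double staircase 2delta_n: rows i = 0..n-1 (top to bottom),
   row i has length 2n - 2i; columns j = 0..2n-1 (left-justified). *)
Definition cell n := ('I_n * 'I_(2 * n))%type.

Definition in_dstair n (c : cell n) : bool := (c.2 < 2 * (n - c.1))%N.

Definition rook_placement n (S : {set cell n}) : bool :=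
  [forall c in S, in_dstair c] &&
  [forall c in S, forall d in S, (c.1 == d.1) ==> (c == d)] &&
  [forall c in S, forall d in S, (c.2 == d.2) ==> (c == d)].

Definition num_placements n k : nat :=
  #|[set S : {set cell n} | rook_placement S && (#|S| == k)]|.

From mathcomp Require Import all_boot zify ring.
Set Implicit Arguments. Unset Strict Implicit. Unset Printing Implicit Defensive.

(* Build 2delta_n row by row, starting from the shortest row.  When a row of
   length 2t is added to rows that are all shorter, a placement of k+1 dots
   either avoids the new row, or has one dot in it, in one of the 2t - k
   columns left free by the other k dots (all of which lie in columns < 2t).
   Hence N(t, k+1) = N(t-1, k+1) + (2t - k) N(t-1, k), which is solved by
   N(t, k) = C(t, k) (t+1)(t)...(t-k+2) = C(t, k) (t+1)!/(t-k+1)!. *)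

Section RowPlacements.
Variables (n m : nat) (len : 'I_n -> nat).

Definition placement_in (A : {set 'I_n}) (S : {set 'I_n * 'I_m}) : bool :=
  [forall c in S, (c.1 \in A) && (c.2 < len c.1)] &&
  [forall c in S, forall d in S, (c.1 == d.1) ==> (c == d)] &&
  [forall c in S, forall d in S, (c.2 == d.2) ==> (c == d)].

Definition placements A k := [set S | placement_in A S && (#|S| == k)].

Lemma placement_inP (A : {set 'I_n}) (S : {set 'I_n * 'I_m}) :
  reflect [/\ {in S, forall c : 'I_n * 'I_m, c.1 \in A /\ c.2 < len c.1},
              {in S &, injective fst} & {in S &, injective snd}]
          (placement_in A S).
Proof.
apply: (iffP idP).
- move=> /andP[/andP[/forall_inP inA /forall_inP inj1] /forall_inP inj2].
  split=> [c /inA /andP // | c d cS dS e | c d cS dS e].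
  + by move/forall_inP: (inj1 c cS) => /(_ d dS); rewrite e eqxx => /eqP.
  + by move/forall_inP: (inj2 c cS) => /(_ d dS); rewrite e eqxx => /eqP.
- case=> inA inj1 inj2; apply/andP; split; first (apply/andP; split).
  + by apply/forall_inP => c /inA [-> ->].
  + apply/forall_inP => c cS; apply/forall_inP => d dS.
    by apply/implyP => /eqP /(inj1 c d cS dS) ->.
  + apply/forall_inP => c cS; apply/forall_inP => d dS.
    by apply/implyP => /eqP /(inj2 c d cS dS) ->.
Qed.

Lemma card_placements0 (A : {set 'I_n}) : #|placements A 0| = 1.
Proof.
suff -> : placements A 0 = [set set0] by rewrite cards1.
apply/setP => S; rewrite !inE cards_eq0 andbC.
case: eqP => [-> | //]; apply/placement_inP; split=> c; by rewrite inE.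
Qed.

Lemma card_placements_set0 k : #|placements set0 k.+1| = 0.
Proof.
apply/eqP; rewrite cards_eq0; apply/eqP/setP => S; rewrite !inE.
apply/negP => /andP[/placement_inP[inA _ _] /eqP cardS].
have /set0Pn[c /inA[]] : S != set0 by rewrite -cards_eq0 cardS.
by rewrite inE.
Qed.

Section AddLongestRow.
Variables (A : {set 'I_n}) (a : 'I_n) (k : nat).
Hypotheses (aNA : a \notin A) (len_max : {in A, forall b, len b <= len a})
           (len_a_le : len a <= m).

Let avoids_row := [set S : {set 'I_n * 'I_m} | [forall c in S, c.1 != a]].
Let drop_row (S : {set 'I_n * 'I_m}) := [set c in S | c.1 != a].
Let used_cols (S : {set 'I_n * 'I_m}) := [set c.2 | c in S].
Let free_cols S := [set j : 'I_m | (j < len a) && (j \notin used_cols S)].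
Let hitting_row := placements (a |: A) k.+1 :\: avoids_row.

Lemma placements_avoiding_row :
  placements (a |: A) k.+1 :&: avoids_row = placements A k.+1.
Proof.
apply/setP => S; rewrite !inE andbAC; congr (_ && _).
apply/andP/placement_inP => [[/placement_inP[inA inj1 inj2] /forall_inP avoid]|].
  split=> // c cS; have [] := inA c cS; rewrite in_setU1.
  by have := avoid c cS; case: eqP.
case=> inA inj1 inj2; split.
  by apply/placement_inP; split=> // c /inA[cA ?]; rewrite in_setU1 cA orbT.
apply/forall_inP => c /inA[cA _]; apply: contraNneq aNA => <-.
exact: cA.
Qed.

Lemma hitting_row_split S : S \in hitting_row ->
  exists j : 'I_m, [/\ (a, j) \in S, S = (a, j) |: drop_row S
                     & (a, j) \notin drop_row S].
Proof.
rewrite !inE => /andP[/forall_inPn[[i j] cS /negbNE /eqP /= ia]].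
move=> /andP[/placement_inP[_ inj1 _] _]; subst i.
exists j; split=> //; last by rewrite inE eqxx andbF.
apply/setP => c; rewrite in_setU1 inE.
have [-> // | ne] := eqVneq c (a, j); case cS' : (c \in S) => //=.
by apply/esym; rewrite -[a]/((a, j).1); apply: contra_neq ne; apply: inj1.
Qed.

Lemma drop_row_placement S : S \in hitting_row -> drop_row S \in placements A k.
Proof.
move=> hitS; have [j [_ eS jN]] := hitting_row_split hitS.
move: hitS; rewrite !inE.
move=> /andP[_ /andP[/placement_inP[inA inj1 inj2] /eqP cardS]].
apply/andP; split; last by move: cardS; rewrite {1}eS cardsU1 jN add1n => -[->].
apply/placement_inP; split=> [c | c d | c d]; rewrite !inE.
- move=> /andP[cS ca]; have [] := inA c cS.
  by rewrite in_setU1 (negbTE ca).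
- by move=> /andP[cS _] /andP[dS _]; apply: inj1.
- by move=> /andP[cS _] /andP[dS _]; apply: inj2.
Qed.

Lemma add_row_dot S' j : S' \in placements A k -> j \in free_cols S' ->
  [/\ (a, j) |: S' \in hitting_row, drop_row ((a, j) |: S') = S'
    & (a, j) \notin S'].
Proof.
rewrite !inE => /andP[/placement_inP[inA inj1 inj2] /eqP cardS] /andP[ja jN].
have rowN c : c \in S' -> c.1 != a.
  by move=> /inA[cA _]; apply: contraNneq aNA => <-.
have ajN : (a, j) \notin S' by apply/negP => /rowN; rewrite eqxx.
split=> //.
- rewrite cardsU1 ajN cardS eqxx andbT; apply/andP; split.
    by apply/forall_inPn; exists (a, j); rewrite ?setU11 //= eqxx.
  apply/placement_inP; split.
  + move=> c; rewrite in_setU1 => /predU1P[-> | /inA[cA ?]].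
      by rewrite setU11.
    by rewrite in_setU1 cA orbT.
  + move=> c d; rewrite !in_setU1.
    move=> /predU1P[-> | cS] /predU1P[-> | dS] //= e; last exact: inj1.
    * by have := rowN d dS; rewrite -e eqxx.
    * by have := rowN c cS; rewrite e eqxx.
  + move=> c d; rewrite !in_setU1.
    move=> /predU1P[-> | cS] /predU1P[-> | dS] //= e; last exact: inj2.
    * by case/negP: jN; apply/imsetP; exists d.
    * by case/negP: jN; apply/imsetP; exists c.
- apply/setP => c; rewrite inE in_setU1.
  have [-> | _] /= := eqVneq c (a, j); first by rewrite (negbTE ajN) eqxx.
  by case cS : (c \in S') => //=; rewrite rowN.
Qed.

Lemma card_free_cols S' : S' \in placements A k -> #|free_cols S'| = len a - k.
Proof.
rewrite inE => /andP[/placement_inP[inA _ inj2] /eqP cardS].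
have -> : free_cols S' = [set j : 'I_m | j < len a] :\: used_cols S'.
  by apply/setP => j; rewrite !inE andbC.
have used_sub : used_cols S' \subset [set j : 'I_m | j < len a].
  apply/subsetP => _ /imsetP[c /inA[cA lt] ->]; rewrite inE.
  exact: leq_trans lt (len_max cA).
have card_lt : #|[set j : 'I_m | j < len a]| = len a.
  have widen_inj : injective (widen_ord len_a_le).
    by move=> x y /(congr1 val) /= e; apply: ord_inj.
  rewrite -[RHS]card_ord -cardsT -(card_imset _ widen_inj).
  congr #|pred_of_set _|; apply/setP => j; rewrite inE.
  apply/idP/imsetP => [lt | [x _ ->] /=]; last exact: ltn_ord.
  by exists (Ordinal lt) => //; apply: val_inj.
rewrite cardsD (setIidPr used_sub) card_lt.
by rewrite /used_cols (card_in_imset inj2) cardS.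
Qed.

Lemma drop_row_fibre S' : S' \in placements A k ->
  [set S in hitting_row | drop_row S == S'] =
  [set (a, j) |: S' | j in free_cols S'].
Proof.
move=> S'P; apply/setP => S; rewrite inE; apply/andP/imsetP.
- case=> hitS /eqP dropS; have [j [jS eS jN]] := hitting_row_split hitS.
  exists j; last by rewrite {1}eS dropS.
  move: hitS; rewrite !inE => /andP[_ /andP[/placement_inP[inA _ inj2] _]].
  rewrite (proj2 (inA _ jS)) /=; apply/imsetP => -[d dS' dj].
  have dS : d \in S by move: dS'; rewrite -dropS inE => /andP[].
  by move: jN; rewrite dropS -(inj2 _ _ dS jS (esym dj)) dS'.
- case=> j jF ->; have [hitS dropS _] := add_row_dot S'P jF.
  by split=> //; apply/eqP.
Qed.

Lemma card_placements_setU1 :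
  #|placements (a |: A) k.+1| =
    #|placements A k.+1| + (len a - k) * #|placements A k|.
Proof.
rewrite -(cardsID avoids_row) placements_avoiding_row; congr (_ + _).
rewrite -sum1_card (partition_big drop_row (mem (placements A k))); last first.
  exact: drop_row_placement.
rewrite mulnC -sum_nat_const; apply: eq_bigr => S' S'P.
have add_inj : {in free_cols S' &, injective (fun j => (a, j) |: S')}.
  move=> j1 j2 j1F _ e; have [_ _ ajN] := add_row_dot S'P j1F.
  have : (a, j1) \in (a, j2) |: S' by rewrite -e setU11.
  by rewrite in_setU1 (negbTE ajN) orbF => /eqP[].
rewrite -(card_free_cols S'P) -(card_in_imset add_inj) -(drop_row_fibre S'P).
by rewrite -sum1_card; apply: eq_bigl => S; rewrite [in RHS]inE.
Qed.

End AddLongestRow.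
End RowPlacements.

Lemma stair_count_recurrence t k :
  'C(t, k.+1) * t.+1 ^_ k.+1 + (2 * t.+1 - k) * ('C(t, k) * t.+1 ^_ k) =
  'C(t.+1, k.+1) * t.+2 ^_ k.+1.
Proof.
rewrite ffactnSr ffactSS binS.
set F := t.+1 ^_ k; set X := 'C(t, k.+1); set Y := 'C(t, k).
have mulX : k.+1 * X = (t - k) * Y by rewrite mul_bin_left.
suff key : X * (t.+1 - k) + (2 * t.+1 - k) * Y = (Y + X) * t.+2.
  transitivity (F * (X * (t.+1 - k) + (2 * t.+1 - k) * Y)); first ring.
  by rewrite key; ring.
have [kt | tk] := leqP k t; first nia.
by rewrite /X /Y !bin_small ?muln0 // ltnW.
Qed.

Section DoubleStaircase.
Variable n : nat.

Definition stair_len (i : 'I_n) := 2 * (n - i).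

Definition bottom_rows t := [set i : 'I_n | n - t <= i].

Lemma card_stair_placements t k : t <= n ->
  #|placements (2 * n) stair_len (bottom_rows t) k| = 'C(t, k) * t.+1 ^_ k.
Proof.
elim: t k => [|t IH] [|k] tn; rewrite ?card_placements0 ?bin0 ?ffactn0 //.
  have -> : bottom_rows 0 = set0.
    by apply/setP => i; rewrite !inE subn0 leqNgt ltn_ord.
  by rewrite card_placements_set0 bin0n.
have row_lt : n - t.+1 < n by lia.
set a := Ordinal row_lt.
have -> : bottom_rows t.+1 = a |: bottom_rows t.
  apply/setP => i; rewrite !inE -val_eqE /=; lia.
rewrite card_placements_setU1 ?inE /stair_len /= -?ltnNge; try lia.
- by rewrite !IH ?(ltnW tn) // (_ : 2 * (n - (n - t.+1)) = 2 * t.+1);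
    [exact: stair_count_recurrence | lia].
- by move=> b; rewrite inE; lia.
Qed.

End DoubleStaircase.

Lemma rook_placementE n (S : {set cell n}) :
  rook_placement S = placement_in (@stair_len n) setT S.
Proof.
rewrite /rook_placement /placement_in; congr (_ && _ && _).
by apply: eq_forallb => c; rewrite in_setT.
Qed.

Theorem mainTheorem10 (n k : nat) (hk : (k <= n)%N) :
  (num_placements n k * (n - k + 1)`!)%N = ((n + 1)`! * 'C(n, k))%N.
Proof.
have -> : num_placements n k =
          #|placements (2 * n) (@stair_len n) (bottom_rows n n) k|.
  have -> : bottom_rows n n = setT by apply/setP => i; rewrite !inE subnn.
  by congr #|pred_of_set _|; apply/setP => S; rewrite !inE rook_placementE.
rewrite card_stair_placements // -mulnA mulnC; congr (_ * _).
by rewrite !addn1 -subSn // ffact_fact // leqW.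
Qed.
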